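(* Let $\Gamma$ be a $\Bbbk$-algebra and $\sim$ an equivalence relation on $\mathrm{cfs}(\Gamma)$. If $V$ is a block module and $f:V\to W$ is a $\Gamma$-module map, then $f(V)\subseteq\bigoplus_{B\in\mathrm{Supp}(V)}W(B)$. If moreover $W$ is a block module, then $f=\bigoplus_{B\in\mathrm{cfs}(\Gamma)/{\sim}}f_B$ where $f_B=\pi_B\circ f\circ\iota_B:V(B)\to W(B)$.
   Context: $\mathrm{cfs}(\Gamma)$: maximal two-sided ideals $\mathfrak m$ of $\Gamma$ with $\dim\Gamma/\mathfrak m<\infty$. For a class $B$, $\mathcal W(B)=\{\mathfrak m_1\cdots\mathfrak m_k:k\ge0,\mathfrak m_i\in B\}$; for a $\Gamma$-module $V$, $V(B)=\{v:\mathfrak m v=0$ for some $\mathfrak m\in\mathcal W(B)\}$ (the sum of the $V(B)$ is direct). $V$ is a block module if $V=\bigoplus_BV(B)$, with projections $\pi_B$ and inclusions $\iota_B$; $\mathrm{Supp}(V)=\{B:V(B)\neq0\}$. *)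

From HB Require Import structures.
From mathcomp Require Import all_boot all_algebra.
From Stdlib Require Import ClassicalEpsilon.
From Stdlib Require List.
Set Implicit Arguments. Unset Strict Implicit. Unset Printing Implicit Defensive.
Import GRing.Theory.
Local Open Scope ring_scope.

Section Defs.
Variables (K : fieldType) (G : algType K).

Definition GModule (V : lmodType K) (act : G -> V -> V) : Prop :=
  (forall a u v, act a (u + v) = act a u + act a v) /\
  [/\ (forall a b v, act (a + b) v = act a v + act b v),
      (forall (k : K) a v, act (k *: a) v = k *: act a v),
      (forall (k : K) a v, act a (k *: v) = k *: act a v),
      (forall v, act 1 v = v) &
      (forall a b v, act (a * b) v = act a (act b v))].

Definition GModMap (V W : lmodType K) (actV : G -> V -> V) (actW : G -> W -> W)
  (f : V -> W) : Prop :=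
  [/\ (forall u v, f (u + v) = f u + f v),
      (forall (k : K) v, f (k *: v) = k *: f v) &
      (forall a v, f (actV a v) = actW a (f v))].

Definition Ideal (m : G -> Prop) : Prop :=
  [/\ m 0, (forall x y, m x -> m y -> m (x + y)),
      (forall (k : K) x, m x -> m (k *: x)),
      (forall a x, m x -> m (a * x)) &
      (forall a x, m x -> m (x * a))].

(* cfs(G): maximal two-sided ideals of finite codimension *)
Definition cfs (m : G -> Prop) : Prop :=
  [/\ Ideal m,
      ~ (forall x, m x),
      (forall n, Ideal n -> (forall x, m x -> n x) ->
          (forall x, n x -> m x) \/ (forall x, n x)) &
      exists (d : nat) (e : 'I_d -> G), forall x,
          exists c : 'I_d -> K, m (x - \sum_(i < d) c i *: e i)].

Fixpoint picks (ms : seq (G -> Prop)) (x : G) : Prop :=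
  match ms with
  | [::] => x = 1
  | m :: ms' => exists a y, m a /\ picks ms' y /\ x = a * y
  end.

(* the product ideal m_1 ... m_k (the unit ideal for k = 0) *)
Definition prodI (ms : seq (G -> Prop)) (x : G) : Prop :=
  forall I, Ideal I -> (forall y, picks ms y -> I y) -> I x.

Definition Vblk (V : lmodType K) (act : G -> V -> V) (B : (G -> Prop) -> Prop)
  (v : V) : Prop :=
  exists ms : seq (G -> Prop), (forall m, List.In m ms -> B m) /\
    (forall x, prodI ms x -> act x v = 0).

Definition cls (rel : (G -> Prop) -> (G -> Prop) -> Prop) (m : G -> Prop) :
  (G -> Prop) -> Prop := fun n => cfs n /\ rel m n.

Definition EquivOnCfs (rel : (G -> Prop) -> (G -> Prop) -> Prop) : Prop :=
  [/\ (forall m, cfs m -> rel m m),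
      (forall m n, cfs m -> cfs n -> rel m n -> rel n m) &
      (forall m n p, cfs m -> cfs n -> cfs p -> rel m n -> rel n p -> rel m p)].

Definition inSupp (V : lmodType K) (act : G -> V -> V) rel (m : G -> Prop) : Prop :=
  exists v : V, v <> 0 /\ Vblk act (cls rel m) v.

(* V is a block module: V = sum of the V(B) (the sum is automatically direct) *)
Definition blockModule (V : lmodType K) (act : G -> V -> V) rel : Prop :=
  forall v : V, exists s : seq ((G -> Prop) * V),
    (forall p, List.In p s -> cfs p.1 /\ Vblk act (cls rel p.1) p.2) /\
    v = \sum_(p <- s) p.2.

Definition isProj (V : lmodType K) (act : G -> V -> V) rel (m : G -> Prop)
  (v u : V) : Prop :=
  Vblk act (cls rel m) u /\
  exists s : seq ((G -> Prop) * V),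
    (forall p, List.In p s -> [/\ cfs p.1, ~ rel m p.1 & Vblk act (cls rel p.1) p.2]) /\
    v - u = \sum_(p <- s) p.2.

(* the projection pi_B (composed with the inclusion iota_B) *)
Definition proj (V : lmodType K) (act : G -> V -> V) rel (m : G -> Prop)
  (v : V) : V := epsilon (inhabits (0 : V)) (isProj act rel m v).

End Defs.

(* Distinct maximal ideals are comaximal, and comaximality passes to finite
   products of ideals.  So if a vector is killed both by a product of ideals of
   the block B and by a product of ideals of blocks other than B, writing
   1 = a + b with a, b in these products shows that it is 0: the sum of the V(B)
   is direct and the components pi_B v are well defined.  A module map commutes
   with the action, hence maps V(B) into W(B); so in f v = sum_B f (pi_B v) each
   summand lies in W(B) and is its own B-component. *)

From mathcomp Require Import all_boot all_algebra.
From Stdlib Require List.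
From Stdlib Require Import ClassicalEpsilon FunctionalExtensionality PropExtensionality.
Set Implicit Arguments. Unset Strict Implicit. Unset Printing Implicit Defensive.
Import GRing.Theory.

Lemma eq_big_In {R : Type} {idx : R} {op : R -> R -> R} {I : Type} {r : seq I}
    {F1 F2 : I -> R} :
  (forall i, List.In i r -> F1 i = F2 i) ->
  \big[op/idx]_(i <- r) F1 i = \big[op/idx]_(i <- r) F2 i.
Proof.
elim: r => [|i r IH] eqF; first by rewrite !big_nil.
rewrite !big_cons eqF ?IH //; last by left.
by move=> j rj; apply: eqF; right.
Qed.

Lemma In_nth (T : Type) (x0 : T) (s : seq T) i : i < size s -> List.In (nth x0 s i) s.
Proof. by elim: s i => [|x s IH] [|i] //= lt_i; [left | right; apply: IH]. Qed.

Section Representatives.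
Variables (T : Type) (e : rel T).

Fixpoint reps (s : seq T) : seq T :=
  if s is x :: s' then
    if has (e x) (reps s') then reps s' else x :: reps s'
  else [::].

Lemma reps_incl s : List.incl (reps s) s.
Proof.
elim: s => [|x s IH] //=; case: ifP => _; first exact: List.incl_tl.
exact: List.incl_cons (List.in_eq x s) (List.incl_tl x IH).
Qed.

Lemma reps_pairwise s : pairwise (fun x y => ~~ e x y) (reps s).
Proof.
elim: s => [|x s IH] //=; case: ifP => // /negbT.
by rewrite -all_predC /= IH andbT.
Qed.

Lemma reps_cover s x : List.In x s -> e x x -> has (e x) (reps s).
Proof.
elim: s => [|y s IH] //= [<-|xs] exx; case: ifP => //= _.
- by rewrite exx.
- by rewrite IH.
- by rewrite IH ?orbT.
Qed.

Hypotheses (e_sym : symmetric e) (e_trans : transitive e).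

Lemma count_pairwise_le1 xs x :
  pairwise (fun y z => ~~ e y z) xs -> count (e x) xs <= 1.
Proof.
elim: xs => [|y xs IH] //= /andP [apart_y /IH le1].
case: (boolP (e x y)) => [exy|_]; last by rewrite add0n.
suff: ~~ has (e x) xs by rewrite has_count -leqNgt leqn0 => /eqP ->.
apply: contraL apart_y => /(sub_has (a2 := e y)) hy.
by rewrite all_predC negbK hy // => z; apply: e_trans; rewrite e_sym.
Qed.

Lemma count_reps s x : List.In x s -> e x x -> count (e x) (reps s) = 1%N.
Proof.
move=> xs exx; apply/eqP; rewrite eqn_leq count_pairwise_le1 ?reps_pairwise //.
by rewrite -has_count reps_cover.
Qed.

End Representatives.

Local Open Scope ring_scope.

Section Ideals.
Variables (K : fieldType) (G : algType K).
Implicit Types (I J : G -> Prop) (ms ns : seq (G -> Prop)).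

Lemma picks_cat ms ns y : picks (ms ++ ns) y ->
  exists y1 y2, [/\ picks ms y1, picks ns y2 & y = y1 * y2].
Proof.
elim: ms y => [|m ms IH] y /=; first by exists 1, y; rewrite mul1r.
case=> a [z [ma [/IH [z1 [z2 [ms_z1 ns_z2 ->]]] ->]]].
by exists (a * z1), z2; split; [exists a, z1 | | rewrite mulrA].
Qed.

Lemma prodI_ideal ms : Ideal (prodI ms).
Proof.
split=> [I [I0 _ _ _ _] _ //| x y px py | k x px | a x px | a x px] I idI gen;
  case: (idI) => _ ID IZ IMl IMr.
- exact: ID (px I idI gen) (py I idI gen).
- exact: IZ (px I idI gen).
- exact: IMl (px I idI gen).
- exact: IMr (px I idI gen).
Qed.

Lemma prodI_picks ms y : picks ms y -> prodI ms y.
Proof. by move=> ms_y I _; apply. Qed.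

Lemma prodI_catl ms ns x : prodI (ms ++ ns) x -> prodI ms x.
Proof.
move=> px I idI gen; apply: px => // y /picks_cat [y1 [y2 [ms_y1 _ ->]]].
by case: idI => _ _ _ _ IMr; apply/IMr/gen.
Qed.

Lemma prodI_catr ms ns x : prodI (ms ++ ns) x -> prodI ns x.
Proof.
move=> px I idI gen; apply: px => // y /picks_cat [y1 [y2 [_ ns_y2 ->]]].
by case: idI => _ _ _ IMl _; apply/IMl/gen.
Qed.

Lemma prodI_cons n ns a b : Ideal n -> n a -> prodI ns b -> prodI (n :: ns) (a * b).
Proof.
move=> [_ _ _ _ nMr] na pb I idI gen; case: (idI) => _ ID IZ _ IMr.
(* the quotient [(I : n)] is an ideal containing the generators of [prodI ns] *)
pose J y := forall c, n c -> I (c * y).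
have idJ : Ideal J.
  split=> [c _ | x y Jx Jy c nc | k x Jx c nc | d x Jx c nc | d x Jx c nc].
  - by rewrite mulr0; case: idI.
  - by rewrite mulrDr; apply: ID; [apply: Jx | apply: Jy].
  - by rewrite -scalerAr; apply/IZ/Jx.
  - by rewrite mulrA; apply/Jx/nMr.
  - by rewrite mulrA; apply/IMr/Jx.
by apply: (pb J idJ) => // y ns_y c nc; apply: gen; exists c, y.
Qed.

Definition comax I J := exists a b, [/\ I a, J b & a + b = 1].

Lemma comax_sym I J : comax I J -> comax J I.
Proof. by case=> a [b [Ia Jb ab1]]; exists b, a; rewrite addrC. Qed.

Lemma comax_prodIl ns J : Ideal J ->
  (forall n, List.In n ns -> Ideal n /\ comax n J) -> comax (prodI ns) J.
Proof.
move=> idJ; case: (idJ) => _ JD _ JMl JMr; elim: ns => [|n ns IH] hns.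
  by exists 1, 0; split; [apply: prodI_picks | case: idJ | rewrite addr0].
have [idn [a1 [b1 [na1 Jb1 e1]]]] := hns n (or_introl erefl).
have [a2 [b2 [pa2 Jb2 e2]]] := IH (fun m ns_m => hns m (or_intror ns_m)).
exists (a1 * a2), (a1 * b2 + b1 * a2 + b1 * b2); split.
- exact: prodI_cons.
- by apply: (JD); [apply: (JD); [apply: JMl | apply: JMr] | apply: JMl].
- by rewrite -[1]mulr1 -{1}e1 -e2 mulrDl !mulrDr !addrA.
Qed.

Lemma comax_prodI ms ns :
  (forall m, List.In m ms -> Ideal m) -> (forall n, List.In n ns -> Ideal n) ->
  (forall m n, List.In m ms -> List.In n ns -> comax m n) ->
  comax (prodI ms) (prodI ns).
Proof.
move=> idms idns cmn; apply: comax_prodIl; first exact: prodI_ideal.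
move=> m ms_m; split; first exact: idms.
apply/comax_sym/comax_prodIl; first exact: idms.
by move=> n ns_n; split; [apply: idns | apply/comax_sym/cmn].
Qed.

Definition addI I J x := exists a b, [/\ I a, J b & x = a + b].

Lemma addI_ideal I J : Ideal I -> Ideal J -> Ideal (addI I J).
Proof.
move=> [I0 ID IZ IMl IMr] [J0 JD JZ JMl JMr].
split=> [|x y [a [b [Ia Jb ->]]] [a' [b' [Ia' Jb' ->]]]
         |k x [a [b [Ia Jb ->]]] |c x [a [b [Ia Jb ->]]] |c x [a [b [Ia Jb ->]]]].
- by exists 0, 0; rewrite addr0.
- by exists (a + a'), (b + b'); split; [exact: ID | exact: JD | rewrite addrACA].
- by exists (k *: a), (k *: b); split; [exact: IZ | exact: JZ | rewrite scalerDr].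
- by exists (c * a), (c * b); split; [exact: IMl | exact: JMl | rewrite mulrDr].
- by exists (a * c), (b * c); split; [exact: IMr | exact: JMr | rewrite mulrDl].
Qed.

(* By maximality, [m + n] is either everything or [m], and then [n = m]. *)
Lemma cfs_comax m n : cfs m -> cfs n -> m <> n -> comax m n.
Proof.
move=> [idm m_proper m_max _] [idn _ n_max _] m_neq_n.
have m_sub_addI x : m x -> addI m n x.
  by move=> mx; exists x, 0; rewrite addr0; case: idn.
case: (m_max _ (addI_ideal idm idn) m_sub_addI) => [addI_sub_m | addI_all].
- have n_sub_m x : n x -> m x.
    by move=> nx; apply: addI_sub_m; exists 0, x; rewrite add0r; case: idm.
  case: (n_max _ idm n_sub_m) => [m_sub_n | m_all]; last by case: m_proper.
  case: m_neq_n; apply: functional_extensionality => x.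
  by apply: propositional_extensionality; split; [apply: m_sub_n | apply: n_sub_m].
- by have [a [b [ma nb /esym ab1]]] := addI_all 1; exists a, b.
Qed.

End Ideals.

Section ScalableMaps.
Variables (R : pzRingType) (U V : lmodType R) (g : U -> V).
Hypothesis gZ : forall k u, g (k *: u) = k *: g u.

Lemma scalable_map0 : g 0 = 0.
Proof. by rewrite -(scale0r (0 : U)) gZ scale0r. Qed.

Lemma scalable_mapN : {morph g : u / - u}.
Proof. by move=> u; rewrite -scaleN1r gZ scaleN1r. Qed.

End ScalableMaps.

Section BlockSubmodules.
Variables (K : fieldType) (G : algType K) (V : lmodType K) (act : G -> V -> V).
Hypothesis hV : GModule act.
Implicit Types (B : (G -> Prop) -> Prop) (u v : V).

Let actZ x : forall k v, act x (k *: v) = k *: act x v.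
Proof. by case: hV => _ []. Qed.

Lemma Vblk0 B : Vblk act B 0.
Proof. by exists [::]; split=> // x _; apply: scalable_map0 (actZ x). Qed.

Lemma Vblk_add B u v : Vblk act B u -> Vblk act B v -> Vblk act B (u + v).
Proof.
move=> [ms [Bms ms_u]] [ns [Bns ns_v]]; exists (ms ++ ns); split.
  by move=> m /(List.in_app_or ms ns m) [ms_m | ns_m]; [apply: Bms | apply: Bns].
move=> x px; case: hV => actD _.
by rewrite actD ms_u ?ns_v ?addr0 //; [apply: prodI_catr px | apply: prodI_catl px].
Qed.

Lemma Vblk_opp B u : Vblk act B u -> Vblk act B (- u).
Proof.
by move=> [ms [Bms ms_u]]; exists ms; split=> // x px;
  rewrite (scalable_mapN (actZ x)) ms_u ?oppr0.
Qed.

Lemma Vblk_sum (I : Type) B (r : seq I) (F : I -> V) :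
  (forall i, List.In i r -> Vblk act B (F i)) -> Vblk act B (\sum_(i <- r) F i).
Proof.
elim: r => [|i r IH] BF; first by rewrite big_nil; apply: Vblk0.
rewrite big_cons; apply: Vblk_add; first by apply: BF; left.
by apply: IH => j rj; apply: BF; right.
Qed.

Lemma sub_Vblk B B' v : (forall m, B m -> B' m) -> Vblk act B v -> Vblk act B' v.
Proof. by move=> sBB' [ms [Bms ms_v]]; exists ms; split=> // m /Bms /sBB'. Qed.

Lemma Vblk_comax_eq0 B1 B2 u :
  (forall m, B1 m -> Ideal m) -> (forall n, B2 n -> Ideal n) ->
  (forall m n, B1 m -> B2 n -> comax m n) ->
  Vblk act B1 u -> Vblk act B2 u -> u = 0.
Proof.
move=> idB1 idB2 cB12 [ms [B1ms ms_u]] [ns [B2ns ns_u]].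
have [a [b [pa pb ab1]]] : comax (prodI ms) (prodI ns).
  apply: comax_prodI => [m /B1ms /idB1 | n /B2ns /idB2 | m n /B1ms B1m /B2ns] //.
  exact: cB12.
case: hV => _ [actDl _ _ act1 _].
by rewrite -[u]act1 -ab1 actDl ms_u // ns_u // addr0.
Qed.

End BlockSubmodules.

Lemma Vblk_map (K : fieldType) (G : algType K) (V W : lmodType K)
    (actV : G -> V -> V) (actW : G -> W -> W) (f : V -> W) B v :
  GModMap actV actW f -> Vblk actV B v -> Vblk actW B (f v).
Proof.
move=> [_ fZ f_act] [ms [Bms ms_v]]; exists ms; split=> // x px.
by rewrite -f_act ms_v // (scalable_map0 fZ).
Qed.

Section BlockRelation.
Variables (K : fieldType) (G : algType K) (rel : (G -> Prop) -> (G -> Prop) -> Prop).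
Hypothesis hrel : EquivOnCfs rel.
Implicit Types (m n : G -> Prop).

Definition same_block m n : bool :=
  if excluded_middle_informative [/\ cfs m, cfs n & rel m n] then true else false.

Lemma same_blockP m n : reflect [/\ cfs m, cfs n & rel m n] (same_block m n).
Proof. by rewrite /same_block; case: excluded_middle_informative => h; constructor. Qed.

Lemma same_block_refl m : cfs m -> same_block m m.
Proof. by move=> cm; apply/same_blockP; case: hrel => refl _ _; split; auto. Qed.

Lemma same_block_sym : symmetric same_block.
Proof.
move=> m n; apply/same_blockP/same_blockP; case: hrel => _ sym _ [cm cn r]; split; auto.
Qed.

Lemma same_block_trans : transitive same_block.
Proof.
move=> n m p /same_blockP [cm cn rmn] /same_blockP [_ cp rnp].
by apply/same_blockP; case: hrel => _ _ trans; split; last exact: (trans m n p).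
Qed.

Lemma cls_comax m p : cfs m -> cfs p -> ~ rel m p ->
  forall m' p', cls rel m m' -> cls rel p p' -> comax m' p'.
Proof.
move=> cm cp nrmp m' p' [cm' rmm'] [cp' rpp']; apply: cfs_comax => // eq_m'p'.
have /same_blockP [] // : same_block m p.
apply: (same_block_trans (y := m')); first by apply/same_blockP.
by rewrite same_block_sym eq_m'p'; apply/same_blockP.
Qed.

Definition block_reps (T : Type) (s : seq ((G -> Prop) * T)) : seq (G -> Prop) :=
  [seq p.1 | p <- reps (relpre fst same_block) s].

Section BlockReps.
Variables (T : Type) (s : seq ((G -> Prop) * T)).
Hypothesis cfs_s : forall p, List.In p s -> cfs p.1.

Lemma block_reps_cfs m : List.In m (block_reps s) -> cfs m.
Proof. by case/List.in_map_iff => p [<- rp]; apply/cfs_s/(reps_incl rp). Qed.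

Lemma block_reps_apart d i j : (i < j < size (block_reps s))%N ->
  ~ rel (nth d (block_reps s) i) (nth d (block_reps s) j).
Proof.
have /pairwiseP apart : pairwise (fun m n => ~~ same_block m n) (block_reps s).
  by rewrite pairwise_map; apply: reps_pairwise.
move=> /andP [lt_ij lt_j] r_ij.
have /negP := apart d i j (ltn_trans lt_ij lt_j) lt_j lt_ij; apply; apply/same_blockP.
by split=> //; apply: block_reps_cfs; apply: In_nth => //; apply: ltn_trans lt_j.
Qed.

Lemma count_block_reps p : List.In p s -> count (same_block p.1) (block_reps s) = 1%N.
Proof.
pose e := relpre (@fst (G -> Prop) T) same_block.
have e_sym : symmetric e by move=> q q'; apply: same_block_sym.
have e_trans : transitive e by move=> q q' q''; apply: same_block_trans.
move=> sp; rewrite count_map; apply: (count_reps e_sym e_trans sp).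
exact/same_block_refl/cfs_s.
Qed.

End BlockReps.
End BlockRelation.

Section Projections.
Variables (K : fieldType) (G : algType K) (rel : (G -> Prop) -> (G -> Prop) -> Prop).
Hypothesis hrel : EquivOnCfs rel.
Variables (V : lmodType K) (act : G -> V -> V).
Hypothesis hV : GModule act.
Implicit Types (m : G -> Prop) (s : seq ((G -> Prop) * V)).

Definition block_decomposition s :=
  forall p, List.In p s -> cfs p.1 /\ Vblk act (cls rel p.1) p.2.

Lemma isProj_unique m v u1 u2 : cfs m ->
  isProj act rel m v u1 -> isProj act rel m v u2 -> u1 = u2.
Proof.
move=> cm [Bu1 [s1 [s1_other e1]]] [Bu2 [s2 [s2_other e2]]].
pose other n := exists q, [/\ cfs q, ~ rel m q & cls rel q n].
have Vblk_other s : (forall p, List.In p s ->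
    [/\ cfs p.1, ~ rel m p.1 & Vblk act (cls rel p.1) p.2]) ->
    Vblk act other (\sum_(p <- s) p.2).
  move=> s_other; apply: Vblk_sum => // p /s_other [cp nrp Bp].
  by apply: sub_Vblk Bp => n Bn; exists p.1.
apply/eqP; rewrite -subr_eq0; apply/eqP.
apply: (Vblk_comax_eq0 hV (B1 := cls rel m) (B2 := other)).
- by move=> n [[]].
- by move=> n [q [_ _ [[]]]].
- by move=> m' n Bm' [q [cq nrq Bn]]; apply: (cls_comax hrel cm cq nrq Bm' Bn).
- by apply: Vblk_add; last apply: Vblk_opp.
have -> : u1 - u2 = (v - u2) - (v - u1) by symmetry; rewrite opprB addrC addrA subrK.
by rewrite e1 e2; apply: Vblk_add; last apply: Vblk_opp; auto.
Qed.

Lemma proj_eq m v u : cfs m -> isProj act rel m v u -> proj act rel m v = u.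
Proof.
move=> cm pu; apply: (isProj_unique cm _ pu).
by rewrite /proj; apply: epsilon_spec; exists u.
Qed.

Lemma isProj_sum m s : cfs m -> block_decomposition s ->
  isProj act rel m (\sum_(p <- s) p.2) (\sum_(p <- s | same_block rel m p.1) p.2).
Proof.
move=> cm ds; split.
  rewrite -big_filter; apply: Vblk_sum => // p /List.filter_In [sp mp].
  have [cp Bp] := ds p sp.
  apply: sub_Vblk Bp => n [cn rpn]; split=> //.
  have /same_blockP [] // : same_block rel m n.
  by apply: (same_block_trans hrel mp); apply/same_blockP.
exists [seq p <- s | ~~ same_block rel m p.1]; split.
  move=> p /List.filter_In [sp /negP nmp]; have [cp Bp] := ds p sp.
  by split=> // rmp; apply: nmp; apply/same_blockP.
by rewrite big_filter (bigID (fun p => same_block rel m p.1)) /= addrAC subrr add0r.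
Qed.

Lemma proj_sum m s : cfs m -> block_decomposition s ->
  proj act rel m (\sum_(p <- s) p.2) = \sum_(p <- s | same_block rel m p.1) p.2.
Proof. by move=> cm ds; apply/proj_eq/isProj_sum. Qed.

Lemma proj_Vblk m w : cfs m -> Vblk act (cls rel m) w -> proj act rel m w = w.
Proof.
move=> cm Bw; apply: proj_eq => //; split=> //.
by exists [::]; split=> //; rewrite big_nil subrr.
Qed.

Lemma Vblk_proj m s : cfs m -> block_decomposition s ->
  Vblk act (cls rel m) (proj act rel m (\sum_(p <- s) p.2)).
Proof. by move=> cm ds; have [] := isProj_sum cm ds; rewrite -proj_sum. Qed.

(* Each [p.2] is counted once, by the representative of the block of [p.1]. *)
Lemma sum_proj_block_reps s : block_decomposition s ->
  \sum_(p <- s) p.2 =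
  \sum_(m <- block_reps rel s) proj act rel m (\sum_(p <- s) p.2).
Proof.
move=> ds; have cfs_s p : List.In p s -> cfs p.1 by case/ds.
have proj_reps m : List.In m (block_reps rel s) ->
    proj act rel m (\sum_(p <- s) p.2) = \sum_(p <- s | same_block rel m p.1) p.2.
  by move/(block_reps_cfs cfs_s) => cm; apply: proj_sum.
rewrite (eq_big_In proj_reps).
rewrite (exchange_big_dep predT) //=; apply: eq_big_In => p sp.
rewrite big_const_seq (eq_count (a2 := same_block rel p.1)); last first.
  by move=> m; apply: same_block_sym.
by rewrite count_block_reps //= addr0.
Qed.

End Projections.

Section ModuleMaps.
Variables (K : fieldType) (G : algType K) (rel : (G -> Prop) -> (G -> Prop) -> Prop).
Hypothesis hrel : EquivOnCfs rel.
Variables (V W : lmodType K) (actV : G -> V -> V) (actW : G -> W -> W).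
Hypotheses (hV : GModule actV) (hW : GModule actW).
Variable f : V -> W.
Hypothesis hf : GModMap actV actW f.

Let f0 : f 0 = 0.
Proof. by case: hf => _ fZ _; apply: scalable_map0. Qed.

Let f_sum (I : Type) (r : seq I) (F : I -> V) :
  f (\sum_(i <- r) F i) = \sum_(i <- r) f (F i).
Proof. by case: hf => fD _ _; apply: (big_morph f fD f0). Qed.

Lemma image_in_support v : blockModule actV rel ->
  exists s : seq ((G -> Prop) * W),
    (forall p, List.In p s ->
       [/\ cfs p.1, inSupp actV rel p.1 & Vblk actW (cls rel p.1) p.2]) /\
    f v = \sum_(p <- s) p.2.
Proof.
move=> /(_ v) [s [ds ->]].
exists [seq (p.1, f p.2) | p <- s & p.2 != 0]; split.
  move=> _ /List.in_map_iff [p [<- /List.filter_In [sp /eqP p2_neq0]]].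
  have [cp Bp] := ds p sp.
  by split=> //; [exists p.2 | apply: Vblk_map hf Bp].
rewrite big_map big_filter f_sum [RHS]big_mkcond /=.
by apply: eq_bigr => p _; case: eqP => [->|].
Qed.

Lemma map_block_decomposition v : blockModule actV rel ->
  exists ms : seq (G -> Prop),
    (forall m, List.In m ms -> cfs m) /\
    (forall i j, (i < j < size ms)%N ->
       ~ rel (nth (fun _ => False) ms i) (nth (fun _ => False) ms j)) /\
    v = \sum_(m <- ms) proj actV rel m v /\
    f v = \sum_(m <- ms) proj actW rel m (f (proj actV rel m v)).
Proof.
move=> /(_ v) [s [ds ev]]; have cfs_s p : List.In p s -> cfs p.1 by case/ds.
have v_proj : v = \sum_(m <- block_reps rel s) proj actV rel m v.
  by rewrite ev -sum_proj_block_reps.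
exists (block_reps rel s); split; first exact: block_reps_cfs.
split; first exact: block_reps_apart.
split=> //; rewrite {1}v_proj f_sum; apply: eq_big_In => m /(block_reps_cfs cfs_s) cm.
have Bm : Vblk actW (cls rel m) (f (proj actV rel m v)).
  by apply: Vblk_map hf _; rewrite ev; apply: Vblk_proj.
by rewrite (proj_Vblk hrel hW cm Bm).
Qed.

End ModuleMaps.

Theorem mainTheorem6 (K : fieldType) (G : algType K)
  (rel : (G -> Prop) -> (G -> Prop) -> Prop) (hrel : EquivOnCfs rel)
  (V W : lmodType K) (actV : G -> V -> V) (actW : G -> W -> W)
  (hV : GModule actV) (hW : GModule actW)
  (f : V -> W) (hf : GModMap actV actW f) :
  blockModule actV rel ->
  (forall v : V, exists s : seq ((G -> Prop) * W),
     (forall p, List.In p s ->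
        [/\ cfs p.1, inSupp actV rel p.1 & Vblk actW (cls rel p.1) p.2]) /\
     f v = \sum_(p <- s) p.2) /\
  (blockModule actW rel ->
     (forall m, cfs m -> forall v, Vblk actV (cls rel m) v ->
        Vblk actW (cls rel m) (f v)) /\
     (forall v : V, exists ms : seq (G -> Prop),
        (forall m, List.In m ms -> cfs m) /\
        (forall i j, (i < j < size ms)%N ->
           ~ rel (nth (fun _ => False) ms i) (nth (fun _ => False) ms j)) /\
        v = \sum_(m <- ms) proj actV rel m v /\
        f v = \sum_(m <- ms) proj actW rel m (f (proj actV rel m v)))).
Proof.
move=> blockV; split=> [v | _]; first exact: (image_in_support hf v blockV).
(* the second part does not need [W] to be a block module *)
split=> [m _ v | v]; first exact: Vblk_map.
exact: (map_block_decomposition hrel hV hW hf v blockV).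
Qed.
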